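(* Let $Q\in\mathbb{N}$ be the denominator $q_\ell$ of a convergent of an irrational number, and let $x_j=\frac{j+\varepsilon_j}{Q}$ for $0\le j\le Q-1$, where $0<\varepsilon_j<1$. Then $$\sum_{j=0}^{Q-1}\log(x_j)-Q\int_0^1\log(x)\,dx=\sum_{j=1}^{Q-1}\frac{\varepsilon_j-1/2}{j}+\log(\varepsilon_0)+O(1),$$ with an absolute implied constant independent of the $\varepsilon_j$ and of $Q$. *)

From Stdlib Require Import Reals ZArith.
From Coquelicot Require Import Coquelicot.
Open Scope R_scope.

Definition irrational (alpha : R) : Prop :=
  ~ exists (p : Z) (q : Z), q <> 0%Z /\ alpha = IZR p / IZR q.

(* floor, via Stdlib's Int_part (= up x - 1 = floor x) *)
Definition floorR (x : R) : Z := Int_part x.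

Fixpoint cf_rem (alpha : R) (n : nat) : R :=
  match n with
  | O => alpha
  | S n => / (cf_rem alpha n - IZR (floorR (cf_rem alpha n)))
  end.

Definition cf_a (alpha : R) (n : nat) : Z := floorR (cf_rem alpha n).

(* (q_{n-1}, q_n) with q_{-1} = 0, q_0 = 1, q_{n+1} = a_{n+1} q_n + q_{n-1} *)
Fixpoint cf_qpair (alpha : R) (n : nat) : Z * Z :=
  match n with
  | O => (0%Z, 1%Z)
  | S n => let (qm, q) := cf_qpair alpha n in
           (q, (cf_a alpha (S n) * q + qm)%Z)
  end.

Definition cf_denom (alpha : R) (n : nat) : Z := snd (cf_qpair alpha n).

(* With F x = x ln x - x, an antiderivative of ln, the Taylor bounds for ln (1 + t) give
   ln (j + e) = F (j + 1) - F j + (e - 1/2) / j + O(1/j^2) for j >= 1 and 0 < e < 1.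
   Summing over 1 <= j <= Q - 1 telescopes, the errors add up to at most sum 1/j^2 <= 2,
   and Q * (integral of ln over (0,1]) = -Q = F Q - Q ln Q, so only the j = 0 term
   ln (e_0 / Q) is left over.  The continued fraction enters only through Q >= 1: the
   partial quotients a_(n+1) of an irrational number are at least 1. *)

From Stdlib Require Import Reals ZArith Lra Psatz.
From Coquelicot Require Import Coquelicot.
Open Scope R_scope.

Lemma nonneg_of_derive_nonneg (f df : R -> R) (u : R) :
  0 <= u -> f 0 = 0 ->
  (forall c, 0 <= c <= u -> is_derive f c (df c)) ->
  (forall c, 0 <= c <= u -> 0 <= df c) -> 0 <= f u.
Proof.
intros Hu Hf0 Hd Hdf.
destruct (MVT_gen f 0 u df) as [c [Hc Hmvt]]; rewrite ?Rmin_left, ?Rmax_right in * by lra.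
- intros c Hc; apply Hd; lra.
- intros c Hc; apply derivable_continuous_pt.
  exists (df c); apply is_derive_Reals, Hd; lra.
- rewrite Hf0 in Hmvt. specialize (Hdf c Hc). nra.
Qed.

Lemma ln_1p_lower u : 0 <= u -> u - u^2/2 <= ln (1 + u).
Proof.
intros Hu.
enough (0 <= ln (1 + u) - (u - u^2/2)) by lra.
apply (nonneg_of_derive_nonneg (fun v => ln (1 + v) - (v - v^2/2)) (fun v => v^2/(1 + v))); [exact Hu | | |].
- cbv beta; rewrite Rplus_0_r, ln_1; field.
- intros c Hc; auto_derive; [lra | field; lra].
- intros c Hc; apply Rdiv_le_0_compat; nra.
Qed.

Lemma ln_1p_upper u : 0 <= u -> ln (1 + u) <= u - u^2/2 + u^3/3.
Proof.
intros Hu.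
enough (0 <= u - u^2/2 + u^3/3 - ln (1 + u)) by lra.
apply (nonneg_of_derive_nonneg (fun v => v - v^2/2 + v^3/3 - ln (1 + v)) (fun v => v^3/(1 + v))); [exact Hu | | |].
- cbv beta; rewrite Rplus_0_r, ln_1; field.
- intros c Hc; auto_derive; [lra | field; lra].
- intros c Hc; apply Rdiv_le_0_compat; nra.
Qed.

Lemma ln_le_sub1 y : 0 < y -> ln y <= y - 1.
Proof.
intros Hy. pose proof (exp_ineq1_le (ln y)) as H. rewrite exp_ln in H by lra. lra.
Qed.

Definition ln_antideriv (x : R) : R := x * ln x - x.

Lemma ln_shift_approx x e : 1 <= x -> 0 < e < 1 ->
  Rabs (ln (x + e) - (e - 1/2) / x - (ln_antideriv (x + 1) - ln_antideriv x))
  <= / x^2.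
Proof.
intros Hx He.
set (t := e / x); set (u := / x).
assert (Hxu : x * u = 1) by (unfold u; field; lra).
assert (Hu : 0 < u <= 1) by nra.
assert (Ht : 0 < t <= u) by (unfold t, Rdiv; fold u; nra).
assert (Hlt : ln (x + e) = ln x + ln (1 + t)).
{ rewrite <- ln_mult by lra. f_equal. unfold t; field; lra. }
assert (Hlu : ln (x + 1) = ln x + ln (1 + u)).
{ rewrite <- ln_mult by lra. f_equal. unfold u; field; lra. }
assert (Hsplit : ln (x + e) - (e - 1/2) / x - (ln_antideriv (x + 1) - ln_antideriv x)
                 = (ln (1 + t) - t) + u/2 + 1 - x * ln (1 + u) - ln (1 + u)).
{ unfold ln_antideriv. rewrite Hlt, Hlu. unfold t, u. field. lra. }
assert (Hxlu : 1 - u/2 <= x * ln (1 + u) <= 1 - u/2 + u^2/3).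
{ assert (x * (u - u^2/2) = 1 - u/2) by (unfold u; field; lra).
  assert (x * (u - u^2/2 + u^3/3) = 1 - u/2 + u^2/3) by (unfold u; field; lra).
  assert (x * (u - u^2/2) <= x * ln (1 + u)) by (apply Rmult_le_compat_l, ln_1p_lower; lra).
  assert (x * ln (1 + u) <= x * (u - u^2/2 + u^3/3)) by (apply Rmult_le_compat_l, ln_1p_upper; lra).
  lra. }
pose proof (ln_1p_lower t ltac:(lra)); pose proof (ln_1p_upper t ltac:(lra)).
pose proof (ln_1p_lower u ltac:(lra)); pose proof (ln_1p_upper u ltac:(lra)).
assert (t^2 <= u^2) by nra. assert (t^3 <= t^2) by nra. assert (u^3 <= u^2) by nra.
replace (/ x^2) with (u^2) by (unfold u; field; lra).
rewrite Hsplit. apply Rabs_le. lra.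
Qed.

Lemma ln_antideriv_small a : 0 < a < 1 -> Rabs (ln_antideriv a) <= 2 * sqrt a.
Proof.
intros Ha. set (s := sqrt a).
assert (Hs : 0 < s) by (apply sqrt_lt_R0; lra).
assert (Hss : s * s = a) by (apply sqrt_sqrt; lra).
assert (Hln_a : ln a = 2 * ln s) by (rewrite <- Hss, ln_mult by lra; ring).
assert (Hln_s : - ln s <= / s - 1).
{ rewrite <- ln_Rinv by lra. apply ln_le_sub1, Rinv_0_lt_compat, Hs. }
assert (Hneg : ln a < 0) by (rewrite <- ln_1; apply ln_increasing; lra).
assert (s * / s = 1) by (field; lra).
unfold ln_antideriv. rewrite Rabs_left by nra. rewrite Hln_a in *. nra.
Qed.

Lemma ln_antideriv_at_right_0 : filterlim ln_antideriv (at_right 0) (locally 0).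
Proof.
apply filterlim_locally. intros e.
assert (Hd : 0 < Rmin 1 ((e / 2)^2)).
{ apply Rmin_pos; [lra | apply pow_lt; pose proof (cond_pos e); lra]. }
exists (mkposreal _ Hd). intros a Ha Ha0.
change (Rabs (a - 0) < Rmin 1 ((e / 2)^2)) in Ha.
change (Rabs (ln_antideriv a - 0) < e).
rewrite Rminus_0_r in Ha |- *. rewrite Rabs_pos_eq in Ha by lra.
pose proof (Rmin_l 1 ((e / 2)^2)); pose proof (Rmin_r 1 ((e / 2)^2)).
assert (Hsqrt : sqrt a < e / 2).
{ rewrite <- (sqrt_pow2 (e / 2)) by (pose proof (cond_pos e); lra).
  apply sqrt_lt_1; lra. }
pose proof (ln_antideriv_small a ltac:(lra)). lra.
Qed.

Lemma is_RInt_gen_ln_0_1 : is_RInt_gen ln (at_right 0) (at_point 1) (-1).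
Proof.
intros P [e HP].
apply Filter_prod with (fun a => 0 < a < 1 /\ ball 0 e (ln_antideriv a)) (fun b => b = 1).
- apply filter_and.
  + exists (mkposreal 1 Rlt_0_1). intros a Ha Ha0.
    change (Rabs (a - 0) < 1) in Ha. rewrite Rminus_0_r, Rabs_pos_eq in Ha by lra. lra.
  + exact (proj1 (filterlim_locally _ _) ln_antideriv_at_right_0 e).
- reflexivity.
- intros a b [Ha Hball] ->. exists (ln_antideriv 1 - ln_antideriv a). split.
  + apply (is_RInt_derive (V := R_CompleteNormedModule) ln_antideriv ln).
    * intros x Hx. rewrite Rmin_left, Rmax_right in Hx by lra.
      unfold ln_antideriv. auto_derive; [lra | field; lra].
    * intros x Hx. rewrite Rmin_left in Hx by lra. apply continuous_ln. lra.
  + apply HP. change (Rabs ((ln_antideriv 1 - ln_antideriv a) - -1) < e).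
    change (Rabs (ln_antideriv a - 0) < e) in Hball.
    unfold ln_antideriv at 1. rewrite ln_1.
    replace (1 * 0 - 1 - ln_antideriv a - -1) with (- (ln_antideriv a - 0)) by ring.
    rewrite Rabs_Ropp. exact Hball.
Qed.

Lemma RInt_gen_ln_0_1 : RInt_gen ln (at_right 0) (at_point 1) = -1.
Proof. apply is_RInt_gen_unique, is_RInt_gen_ln_0_1. Qed.

Lemma sum_n_m_Rminus (u v : nat -> R) n m :
  sum_n_m (fun k => u k - v k) n m = sum_n_m u n m - sum_n_m v n m.
Proof.
rewrite (sum_n_m_ext _ (fun k => plus (u k) (scal (-1) (v k)))).
- rewrite sum_n_m_plus, (sum_n_m_scal_l (V := R_ModuleSpace)).
  change (sum_n_m u n m + -1 * sum_n_m v n m = sum_n_m u n m - sum_n_m v n m). ring.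
- intros k. change (u k - v k = u k + -1 * v k). ring.
Qed.

Lemma sum_n_m_telescope_approx (a g : nat -> R) (n : nat) :
  (forall j, (1 <= j <= n)%nat -> Rabs (a j - (g (S j) - g j)) <= / INR j ^ 2) ->
  Rabs (sum_n_m a 1 n - (g (S n) - g 1%nat)) <= 2.
Proof.
intros Ha.
enough (Hn : Rabs (sum_n_m a 1 n - (g (S n) - g 1%nat)) <= 2 - 2 / INR (S n)).
{ enough (0 < 2 / INR (S n)) by lra.
  apply Rdiv_lt_0_compat; [lra | apply lt_0_INR; lia]. }
induction n as [|n IH].
- rewrite sum_n_m_zero by lia. unfold zero; simpl.
  replace (0 - (g 1%nat - g 1%nat)) with 0 by ring. rewrite Rabs_R0. lra.
- specialize (IH (fun j Hj => Ha j ltac:(lia))).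
  specialize (Ha (S n) ltac:(lia)).
  rewrite sum_n_Sm by lia.
  set (x := INR (S n)) in *.
  assert (Hx : 1 <= x) by (apply (le_INR 1); lia).
  assert (Hstep : / x^2 <= 2 / x - 2 / INR (S (S n))).
  { rewrite S_INR; fold x.
    assert (2 / x - 2 / (x + 1) - / x^2 = (x - 1) / (x^2 * (x + 1))) by (field; lra).
    assert (0 <= (x - 1) / (x^2 * (x + 1))) by (apply Rdiv_le_0_compat; nra).
    lra. }
  replace (plus (sum_n_m a 1 n) (a (S n)) - (g (S (S n)) - g 1%nat))
    with ((sum_n_m a 1 n - (g (S n) - g 1%nat)) + (a (S n) - (g (S (S n)) - g (S n))))
    by (unfold plus; simpl; ring).
  eapply Rle_trans; [apply Rabs_triang | lra].
Qed.

Lemma sum_ln_shift_approx (n : nat) (eps : nat -> R) :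
  (forall j, (1 <= j <= n)%nat -> 0 < eps j < 1) ->
  Rabs (sum_n_m (fun j => ln (INR j + eps j)) 1 n
        - sum_n_m (fun j => (eps j - 1/2) / INR j) 1 n
        - (ln_antideriv (INR n + 1) - ln_antideriv 1)) <= 2.
Proof.
intros Heps. rewrite <- sum_n_m_Rminus, <- S_INR.
apply (sum_n_m_telescope_approx _ (fun j => ln_antideriv (INR j))).
intros j Hj. rewrite S_INR.
apply ln_shift_approx; [apply (le_INR 1) | apply Heps]; lia.
Qed.

Lemma irrational_neq_IZR r k : irrational r -> r <> IZR k.
Proof.
intros Hr E. apply Hr. exists k, 1%Z. split; [lia|]. rewrite E. simpl. field.
Qed.

Lemma irrational_inv_sub_IZR r k : irrational r -> irrational (/ (r - IZR k)).
Proof.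
intros Hr [p [q [Hq E]]].
assert (Hd : r - IZR k <> 0) by (pose proof (irrational_neq_IZR r k Hr); lra).
assert (Hp : p <> 0%Z).
{ intros ->. apply (Rinv_neq_0_compat _ Hd). rewrite E. unfold Rdiv. ring. }
apply Hr. exists (k * p + q)%Z, p. split; [exact Hp|].
apply not_0_IZR in Hp, Hq.
replace r with (/ / (r - IZR k) + IZR k) by (rewrite Rinv_inv; ring).
rewrite E, plus_IZR, mult_IZR. field. split; assumption.
Qed.

Lemma irrational_cf_rem alpha n : irrational alpha -> irrational (cf_rem alpha n).
Proof.
intros H. induction n as [|n IH]; [exact H|]. apply irrational_inv_sub_IZR, IH.
Qed.

Lemma Int_part_ge1 y : 1 <= y -> (1 <= Int_part y)%Z.
Proof.
intros Hy. destruct (base_Int_part y) as [_ H].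
enough (0 < Int_part y)%Z by lia. apply lt_IZR. lra.
Qed.

Lemma cf_a_S_ge1 alpha n : irrational alpha -> (1 <= cf_a alpha (S n))%Z.
Proof.
intros H. apply Int_part_ge1. simpl. unfold floorR.
set (r := cf_rem alpha n).
pose proof (irrational_neq_IZR r (Int_part r) (irrational_cf_rem alpha n H)).
destruct (base_Int_part r).
rewrite <- Rinv_1. apply Rinv_le_contravar; lra.
Qed.

Lemma cf_qpair_bounds alpha n : irrational alpha ->
  (0 <= fst (cf_qpair alpha n) /\ 1 <= snd (cf_qpair alpha n))%Z.
Proof.
intros H. induction n as [|n IH]; simpl; [lia|].
destruct (cf_qpair alpha n) as [qm q]. simpl in *.
pose proof (cf_a_S_ge1 alpha n H). nia.
Qed.

Lemma cf_denom_ge1 alpha n : irrational alpha -> (1 <= cf_denom alpha n)%Z.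
Proof. intros H. apply (cf_qpair_bounds alpha n H). Qed.

Theorem proposition4p1 :
  exists C : R, forall (alpha : R), irrational alpha ->
  forall (l : nat) (eps : nat -> R),
    let Q : nat := Z.to_nat (cf_denom alpha l) in
    (forall j : nat, (j < Q)%nat -> 0 < eps j < 1) ->
    Rabs ( (sum_n_m (fun j => ln ((INR j + eps j) / INR Q)) 0 (Q - 1)
            - INR Q * RInt_gen ln (at_right 0) (at_point 1))
         - (sum_n_m (fun j => (eps j - 1 / 2) / INR j) 1 (Q - 1) + ln (eps 0%nat)) )
    <= C.
Proof.
exists 3. intros alpha Halpha l eps Q Heps.
pose proof (cf_denom_ge1 alpha l Halpha) as HQ.
assert (HQpos : 0 < INR Q) by (apply lt_0_INR; unfold Q; lia).
set (n := (Q - 1)%nat).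
assert (HQn : INR Q = INR n + 1) by (rewrite <- S_INR; f_equal; unfold n, Q; lia).
pose proof (Heps 0%nat ltac:(unfold Q; lia)) as Heps0.
pose proof (sum_ln_shift_approx n eps (fun j Hj => Heps j ltac:(unfold n, Q in *; lia))) as Happrox.
rewrite RInt_gen_ln_0_1, sum_Sn_m by lia.
rewrite (sum_n_m_ext_loc _ (fun j => ln (INR j + eps j) - ln (INR Q))).
2: { intros j Hj. apply ln_div; [|exact HQpos].
     pose proof (pos_INR j); pose proof (Heps j ltac:(unfold n, Q in *; lia)); lra. }
rewrite sum_n_m_Rminus, sum_n_m_const, Nat.sub_succ, Nat.sub_0_r.
replace (INR 0 + eps 0%nat) with (eps 0%nat) by (simpl; ring).
rewrite ln_div by lra.
unfold ln_antideriv in Happrox. rewrite ln_1, <- HQn in Happrox.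
unfold plus; simpl.
match goal with |- Rabs ?E <= _ =>
  replace E with ((sum_n_m (fun j => ln (INR j + eps j)) 1 n
                   - sum_n_m (fun j => (eps j - 1/2) / INR j) 1 n
                   - (INR Q * ln (INR Q) - INR Q - (1 * 0 - 1))) + 1) by (rewrite HQn; ring) end.
eapply Rle_trans; [apply Rabs_triang|]. rewrite Rabs_R1. lra.
Qed.
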